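(* Let $R$ be a semiring. The class of normal monomorphisms and the class of normal epimorphisms in $\mathrm{Mod}_R$ each contain all isomorphisms and are closed under composition.
   Context: Semirings are commutative with $0,1$; an $R$-module is a commutative monoid with $R$-action; $\mathrm{Mod}_R$ is the category of $R$-modules. A morphism $f:M\to N$ is a normal monomorphism if it is the equalizer of some morphism $N\to L$ and the zero map; it is a normal epimorphism if it is the coequalizer of some morphism $L\to M$ and the zero map. *)

From HB Require Import structures.
From mathcomp Require Import all_boot all_order all_algebra.
Set Implicit Arguments. Unset Strict Implicit. Unset Printing Implicit Defensive.
Import GRing.Theory.
Local Open Scope ring_scope.

(* Semiring R : commutative semiring with 0,1 (comPzSemiRingType, 0 = 1 allowed). *)

Definition is_Rlin (R : comPzSemiRingType) (M N : lSemiModType R) (f : M -> N) : Prop :=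
  [/\ f 0 = 0, (forall x y, f (x + y) = f x + f y) & (forall (r : R) x, f (r *: x) = r *: f x)].

Definition is_Riso (R : comPzSemiRingType) (M N : lSemiModType R) (f : M -> N) : Prop :=
  is_Rlin f /\ exists g : N -> M, [/\ is_Rlin g, g \o f = id & f \o g = id].

Definition is_equalizer_zero (R : comPzSemiRingType) (M N L : lSemiModType R)
  (f : M -> N) (g : N -> L) : Prop :=
  g \o f = (fun _ => 0) /\
  forall (X : lSemiModType R) (h : X -> N), is_Rlin h -> g \o h = (fun _ => 0) ->
    exists u : X -> M, [/\ is_Rlin u, f \o u = h &
      forall u' : X -> M, is_Rlin u' -> f \o u' = h -> u' = u].

Definition is_coequalizer_zero (R : comPzSemiRingType) (M N L : lSemiModType R)
  (f : M -> N) (g : L -> M) : Prop :=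
  f \o g = (fun _ => 0) /\
  forall (X : lSemiModType R) (h : M -> X), is_Rlin h -> h \o g = (fun _ => 0) ->
    exists u : N -> X, [/\ is_Rlin u, u \o f = h &
      forall u' : N -> X, is_Rlin u' -> u' \o f = h -> u' = u].

Definition normal_mono (R : comPzSemiRingType) (M N : lSemiModType R) (f : M -> N) : Prop :=
  is_Rlin f /\ exists (L : lSemiModType R) (g : N -> L), is_Rlin g /\ is_equalizer_zero f g.

Definition normal_epi (R : comPzSemiRingType) (M N : lSemiModType R) (f : M -> N) : Prop :=
  is_Rlin f /\ exists (L : lSemiModType R) (g : L -> M), is_Rlin g /\ is_coequalizer_zero f g.

From HB Require Import structures.
From mathcomp Require Import all_boot all_order all_algebra boolp.
Set Implicit Arguments. Unset Strict Implicit. Unset Printing Implicit Defensive.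
Import GRing.Theory.
Local Open Scope ring_scope.
Local Open Scope quotient_scope.

(* Over a semiring, a normal monomorphism is exactly an injective linear map
   f : M -> N whose range is subtractive (x + y and y in f(M) force x in f(M)).
   Testing the equalizer property of f against the lines r |-> r *: n out of R
   gives injectivity and identifies f(M) with the kernel of the map f equalizes
   with zero, hence subtractivity; conversely such an f is the equalizer of the
   projection of N onto its Bourne quotient by f(M), where x ~ y iff
   x + k = y + k' for some k, k' in f(M), since the kernel of that projection is
   the subtractive closure of f(M). Injectivity and subtractive range are both
   stable under composition and hold for isomorphisms.
   A normal epimorphism f is onto, as it factors through its range. If f and g
   coequalize a and b with zero, then g \o f is the coequalizer of the
   inclusion of f^-1(b(L)): a map killing it kills a, so it factors through f,
   and, f being onto, the factor kills b, so it factors through g. *)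

Lemma eq_compE (A B C : Type) (g : B -> C) (f : A -> B) (h : A -> C) :
  g \o f = h -> forall x, g (f x) = h x.
Proof. by move=> <-. Qed.

Section SubSemiModule.
Variables (R : pzSemiRingType) (P : lSemiModType R).

Definition submodClosed_of (S : {pred P}) (hS : subsemimod_closed S) : submodClosed P :=
  HB.pack S (GRing.isSubSemiModClosed.Build R P S hS).

Variable K : submodClosed P.

Definition submod := {x : P | x \in K}.
HB.instance Definition _ := SubType.on submod.
HB.instance Definition _ := Choice.on submod.
HB.instance Definition _ := [SubChoice_isSubLSemiModule of submod by <:].

End SubSemiModule.

Section BourneQuotient.
Variables (R : pzSemiRingType) (P : lSemiModType R) (K : submodClosed P).

Definition bourne_rel (x y : P) : bool :=
  `[< exists k1 k2, [/\ k1 \in K, k2 \in K & x + k1 = y + k2] >].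

Lemma bourne_relP x y :
  reflect (exists k1 k2, [/\ k1 \in K, k2 \in K & x + k1 = y + k2]) (bourne_rel x y).
Proof. exact: asboolP. Qed.

Lemma bourne_refl : reflexive bourne_rel.
Proof. by move=> x; apply/bourne_relP; exists 0, 0; rewrite rpred0. Qed.

Lemma bourne_sym : symmetric bourne_rel.
Proof.
by move=> x y; apply/bourne_relP/bourne_relP => -[k1 [k2 [? ? ?]]]; exists k2, k1.
Qed.

Lemma bourne_trans : transitive bourne_rel.
Proof.
move=> y x z /bourne_relP[k1 [k2 [K1 K2 e1]]] /bourne_relP[k3 [k4 [K3 K4 e2]]].
apply/bourne_relP; exists (k1 + k3), (k4 + k2); rewrite !rpredD //.
by rewrite addrA e1 addrAC e2 addrA.
Qed.

Canonical bourne_equiv := EquivRel bourne_rel bourne_refl bourne_sym bourne_trans.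

Definition bourne_quot := {eq_quot bourne_rel}.
HB.instance Definition _ := Choice.on bourne_quot.

Lemma bourneD x y x' y' : bourne_rel x x' -> bourne_rel y y' -> bourne_rel (x + y) (x' + y').
Proof.
move=> /bourne_relP[k1 [k2 [K1 K2 e1]]] /bourne_relP[k3 [k4 [K3 K4 e2]]].
apply/bourne_relP; exists (k1 + k3), (k2 + k4); rewrite !rpredD //.
by rewrite addrACA e1 e2 addrACA.
Qed.

Lemma bourneZ r x y : bourne_rel x y -> bourne_rel (r *: x) (r *: y).
Proof.
move=> /bourne_relP[k1 [k2 [K1 K2 e]]].
by apply/bourne_relP; exists (r *: k1), (r *: k2); rewrite !rpredZ // -!scalerDr e.
Qed.

Local Notation pi := \pi_bourne_quot.

Lemma pi_eq x y : pi x = pi y <-> bourne_rel x y.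
Proof. by split=> /(@eqquotP _ _ bourne_quot). Qed.

Lemma bourne_repr x : bourne_rel (repr (pi x)) x.
Proof. by apply/pi_eq; rewrite reprK. Qed.

Definition quot_add := lift_op2 bourne_quot +%R.
Definition quot_scale (r : R) := lift_op1 bourne_quot ( *:%R r).

Lemma pi_add : {morph pi : x y / x + y >-> quot_add x y}.
Proof. by move=> x y; unlock quot_add; apply/pi_eq/bourneD; rewrite bourne_sym bourne_repr. Qed.
Canonical pi_add_morph := PiMorph2 pi_add.

Lemma pi_scale r : {morph pi : x / r *: x >-> quot_scale r x}.
Proof. by move=> x; unlock quot_scale; apply/pi_eq/bourneZ; rewrite bourne_sym bourne_repr. Qed.

Lemma quot_addA : associative quot_add.
Proof. by move=> a b c; rewrite -[a]reprK -[b]reprK -[c]reprK !piE addrA. Qed.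

Lemma quot_addC : commutative quot_add.
Proof. by move=> a b; rewrite -[a]reprK -[b]reprK !piE addrC. Qed.

Lemma quot_add0 : left_id (pi 0) quot_add.
Proof. by move=> a; rewrite -[a]reprK !piE add0r. Qed.

HB.instance Definition _ := GRing.isNmodule.Build bourne_quot quot_addA quot_addC quot_add0.

Definition quot_pi (x : P) : bourne_quot := pi x.

Lemma quot_piD : {morph quot_pi : x y / x + y}. Proof. exact: pi_add. Qed.

Lemma quot_scaleA r s a : quot_scale r (quot_scale s a) = quot_scale (r * s) a.
Proof. by rewrite -[a]reprK -!pi_scale scalerA. Qed.

Lemma quot_scale0 a : quot_scale 0 a = 0.
Proof. by rewrite -[a]reprK -pi_scale scale0r. Qed.

Lemma quot_scale1 : left_id 1 quot_scale.
Proof. by move=> a; rewrite -[a]reprK -pi_scale scale1r. Qed.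

Lemma quot_scaleDr : right_distributive quot_scale +%R.
Proof.
by move=> r a b; rewrite -[a]reprK -[b]reprK -quot_piD -!pi_scale -quot_piD scalerDr.
Qed.

Lemma quot_scaleDl a : {morph quot_scale^~ a : r s / r + s}.
Proof. by move=> r s; rewrite -[a]reprK -!pi_scale -quot_piD scalerDl. Qed.

HB.instance Definition _ := GRing.Nmodule_isLSemiModule.Build R bourne_quot
  quot_scaleA quot_scale0 quot_scale1 quot_scaleDr quot_scaleDl.

Lemma quot_pi_eq0 x :
  quot_pi x = 0 <-> exists k1 k2, [/\ k1 \in K, k2 \in K & x + k1 = k2].
Proof.
rewrite [0]/(quot_pi 0) pi_eq.
split=> [/bourne_relP[k1 [k2 [K1 K2]]] | [k1 [k2 [K1 K2 e]]]].
  by rewrite add0r => e; exists k1, k2.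
by apply/bourne_relP; exists k1, k2; rewrite add0r.
Qed.

End BourneQuotient.

Section Linear.
Variable R : comPzSemiRingType.
Implicit Types M N P L : lSemiModType R.

Lemma lin_comp M N P (f : M -> N) (g : N -> P) :
  is_Rlin f -> is_Rlin g -> is_Rlin (g \o f).
Proof. by case=> f0 fD fZ [g0 gD gZ]; split=> /= [|x y|r x]; rewrite ?f0 ?fD ?fZ. Qed.

Lemma zero_lin M N : is_Rlin (fun _ : M => 0 : N).
Proof. by split=> [|_ _|r _]; rewrite ?addr0 ?scaler0. Qed.

Lemma scale_line_lin N (n : N) : is_Rlin (fun r : R^o => r *: n).
Proof. by split=> [|r s|r s]; rewrite ?scale0r ?scalerDl ?scalerA. Qed.

Lemma submod_val_lin P (K : submodClosed P) : is_Rlin (val : submod K -> P).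
Proof. by []. Qed.

Lemma quot_pi_lin P (K : submodClosed P) : is_Rlin (quot_pi K).
Proof. by split=> [//|x y|r x]; [exact: quot_piD | exact: pi_scale]. Qed.

Definition lin_range M N (f : M -> N) : {pred N} := fun n => `[< exists m, f m = n >].

Lemma lin_rangeP M N (f : M -> N) n : reflect (exists m, f m = n) (n \in lin_range f).
Proof. exact: asboolP. Qed.

Lemma lin_range_f M N (f : M -> N) m : f m \in lin_range f.
Proof. by apply/lin_rangeP; exists m. Qed.

Lemma lin_range_closed M N (f : M -> N) : is_Rlin f -> subsemimod_closed (lin_range f).
Proof.
case=> f0 fD fZ; split; first split.
- by rewrite -f0 lin_range_f.
- by move=> _ _ /lin_rangeP[x <-] /lin_rangeP[y <-]; rewrite -fD lin_range_f.
- by move=> r _ /lin_rangeP[x <-]; rewrite -fZ lin_range_f.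
Qed.

Lemma preim_closed M N (f : M -> N) (S : submodClosed N) :
  is_Rlin f -> subsemimod_closed [pred m | f m \in S].
Proof.
case=> f0 fD fZ; split; first split.
- by rewrite inE f0 rpred0.
- by move=> x y; rewrite !inE fD; apply: rpredD.
- by move=> r x; rewrite !inE fZ; apply: rpredZ.
Qed.

Definition subtractive N (S : {pred N}) := forall x y, x + y \in S -> y \in S -> x \in S.

Section Equalizer.
Variables (M N L : lSemiModType R) (f : M -> N) (a : N -> L).
Hypotheses (alin : is_Rlin a) (af : is_equalizer_zero f a).

Lemma equalizer_zero_kerE n : (n \in lin_range f) = (a n == 0).
Proof.
case: af => af0 univ; apply/idP/eqP => [/lin_rangeP[m <-]|an]; first exact: eq_compE af0 m.
case: alin => _ _ aZ; have [|u [_ uf _]] := univ _ _ (scale_line_lin n).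
  by apply: funext => r /=; rewrite aZ an scaler0.
apply/lin_rangeP; exists (u 1).
by have /(congr1 (@^~ (1 : R^o))) := uf; rewrite /= scale1r.
Qed.

Lemma equalizer_zero_subtractive : subtractive (lin_range f).
Proof.
case: alin => _ aD _ x y; rewrite !equalizer_zero_kerE aD => /eqP axy /eqP ay.
by rewrite -axy ay addr0.
Qed.

Lemma equalizer_zero_inj : is_Rlin f -> injective f.
Proof.
case=> _ _ fZ x y fxy; case: af => _ univ; case: alin => _ _ aZ.
have afx : a (f x) = 0 by apply/eqP; rewrite -equalizer_zero_kerE lin_range_f.
have [|u [_ _ uniq]] := univ _ _ (scale_line_lin (f x)).
  by apply: funext => r /=; rewrite aZ afx scaler0.
have line_u z : f z = f x -> (fun r : R^o => r *: z) = u.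
  by move=> fz; apply: uniq (scale_line_lin z) _; apply: funext => r /=; rewrite fZ fz.
have /(congr1 (@^~ 1)) := etrans (line_u x erefl) (esym (line_u y (esym fxy))).
by rewrite /= !scale1r.
Qed.

End Equalizer.

Lemma normal_mono_of_ker M N L (f : M -> N) (k : N -> L) :
  is_Rlin f -> injective f -> is_Rlin k ->
  (forall n, k n = 0 <-> n \in lin_range f) -> normal_mono f.
Proof.
move=> flin finj klin kE; split=> //; exists L, k; split=> //; split.
  by apply: funext => m /=; apply/kE; exact: lin_range_f.
move=> X h hlin kh.
have /choice[u fu] : forall x, exists m, f m = h x.
  by move=> x; apply/lin_rangeP/kE; exact: (eq_compE kh).
case: flin hlin => f0 fD fZ [h0 hD hZ].
exists u; split.
- by split=> [|x y|r x]; apply: finj; rewrite ?fD ?fZ !fu ?f0 ?hD ?hZ.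
- exact: funext.
- by move=> u' _ fu'; apply: funext => x; apply: finj; rewrite fu -fu'.
Qed.

Lemma normal_monoP M N (f : M -> N) :
  normal_mono f <-> [/\ is_Rlin f, injective f & subtractive (lin_range f)].
Proof.
split=> [[flin [L [a [alin af]]]] | [flin finj fsub]].
  by split; [| exact: equalizer_zero_inj af flin | exact: equalizer_zero_subtractive af].
pose K := submodClosed_of (lin_range_closed flin).
apply: (normal_mono_of_ker flin finj (quot_pi_lin K)) => n; rewrite quot_pi_eq0.
split=> [[k1 [k2 [K1 K2 e]]] | nf]; first by apply: fsub K1; rewrite e.
by exists 0, n; rewrite addr0 rpred0.
Qed.

Lemma iso_normal_mono M N (f : M -> N) : is_Riso f -> normal_mono f.
Proof.
case=> flin [g [_ gf fg]]; apply/normal_monoP; split=> //.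
  by apply: (@can_inj _ _ _ g) => x; exact: (eq_compE gf).
by move=> x _ _ _; apply/lin_rangeP; exists (g x); exact: (eq_compE fg).
Qed.

Lemma normal_mono_comp M N P (f : M -> N) (g : N -> P) :
  normal_mono f -> normal_mono g -> normal_mono (g \o f).
Proof.
move=> /normal_monoP[flin finj fsub] /normal_monoP[glin ginj gsub].
apply/normal_monoP; split; [exact: lin_comp | exact: inj_comp |].
move=> x y /lin_rangeP[m2 e] /lin_rangeP[m1 ey]; rewrite -ey /= in e.
have /lin_rangeP[n gn] : x \in lin_range g.
  by apply: gsub (lin_range_f _ (f m1)); rewrite -e lin_range_f.
have /fsub /(_ (lin_range_f _ _)) /lin_rangeP[m fm] : n + f m1 \in lin_range f.
  by apply/lin_rangeP; exists m2; apply: ginj; case: glin => _ gD _; rewrite gD gn.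
by rewrite -gn -fm (lin_range_f (g \o f)).
Qed.

Lemma coequalizer_zero_surj M N L (f : M -> N) (a : L -> M) :
  is_Rlin f -> is_coequalizer_zero f a -> forall n, n \in lin_range f.
Proof.
move=> flin [fa univ] n; pose K := submodClosed_of (lin_range_closed flin).
pose h m : submod K := exist _ (f m) (lin_range_f f m).
have hlin : is_Rlin h by case: (flin) => f0 fD fZ; split=> *; apply: val_inj; rewrite /= ?f0 ?fD ?fZ.
have [|u [ulin uf _]] := univ _ h hlin.
  by apply: funext => l; apply: val_inj; exact: (eq_compE fa).
have [|w [_ _ wuniq]] := univ _ f flin; first exact: fa.
have idlin : is_Rlin (@id N) by [].
have val_u : val \o u = id.
  rewrite (wuniq _ idlin) //; apply: wuniq; first exact: lin_comp (submod_val_lin K).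
  by rewrite -compA uf.
by have := valP (u n); rewrite -[val (u n)]/((val \o u) n) val_u.
Qed.

Lemma normal_epi_surj M N (f : M -> N) : normal_epi f -> forall n, n \in lin_range f.
Proof. by case=> flin [L [a [_ fa]]]; exact: coequalizer_zero_surj fa. Qed.

Lemma iso_normal_epi M N (f : M -> N) : is_Riso f -> normal_epi f.
Proof.
case=> flin [g [glin gf fg]]; split=> //; exists M, (fun _ => 0); split.
  exact: zero_lin.
split; first by apply: funext => x /=; case: flin.
move=> X h hlin _; exists (h \o g); split.
- exact: lin_comp.
- by rewrite -compA gf.
- by move=> u' _ <-; rewrite -compA fg.
Qed.

Lemma normal_epi_comp M N P (f : M -> N) (g : N -> P) :
  normal_epi f -> normal_epi g -> normal_epi (g \o f).
Proof.
move=> nf ng; have fsurj := normal_epi_surj nf.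
case: nf => flin [L1 [a [_ [fa funiv]]]]; case: ng => glin [L2 [b [blin [gb guniv]]]].
pose K := submodClosed_of (preim_closed (submodClosed_of (lin_range_closed blin)) flin).
have inK m : m \in K = (f m \in lin_range b) by [].
split; first exact: lin_comp.
exists (submod K), val; split; first exact: submod_val_lin.
split.
  apply: funext => -[m Km] /=; move: Km; rewrite inK => /lin_rangeP[l <-].
  exact: (eq_compE gb).
move=> X h hlin hK.
have hK0 m : m \in K -> h m = 0 by move=> Km; exact: (eq_compE hK (exist _ m Km)).
have [|u [ulin uf uuniq]] := funiv _ h hlin.
  apply: funext => l; apply: hK0; rewrite inK (eq_compE fa).
  by case: (blin) => b0 _ _; rewrite -b0 lin_range_f.
have [|v [vlin vg vuniq]] := guniv _ u ulin.
  apply: funext => l /=; have /lin_rangeP[m fm] := fsurj (b l).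
  by rewrite -fm (eq_compE uf) hK0 // inK fm lin_range_f.
exists v; split=> [//||v' v'lin v'gf].
- by rewrite compA vg.
- apply: vuniq => //; apply: uuniq; first exact: lin_comp.
  by rewrite -compA.
Qed.

End Linear.

Theorem mainTheorem11 (R : comPzSemiRingType) :
  ((forall (M N : lSemiModType R) (f : M -> N), is_Riso f -> normal_mono f) /\
   (forall (M N P : lSemiModType R) (f : M -> N) (g : N -> P),
      normal_mono f -> normal_mono g -> normal_mono (g \o f))) /\
  ((forall (M N : lSemiModType R) (f : M -> N), is_Riso f -> normal_epi f) /\
   (forall (M N P : lSemiModType R) (f : M -> N) (g : N -> P),
      normal_epi f -> normal_epi g -> normal_epi (g \o f))).
Proof.
split; split.
- exact: iso_normal_mono.
- exact: normal_mono_comp.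
- exact: iso_normal_epi.
- exact: normal_epi_comp.
Qed.
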